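(* Consider the problem $1|p\text{-}batch,v_i,incompatible|\sum w_iC_i$ defined as follows. Let $N=\{1,\ldots,n\}$ be a set of jobs partitioned into families $N_1,\ldots,N_m$ (pairwise disjoint, union $N$). Each job $i$ has a weight $w_i\ge 0$, a size $v_i$ with $0\le v_i\le V$, and processing time $p_i=q_j>0$ for all $i\in N_j$. A single machine of capacity $V$ processes batches: a batch is a set of jobs from a single family whose total size is at most $V$; a batch of family $j$ occupies the machine for $q_j$ time units without interruption, the machine processes at most one batch at a time, every job belongs to exactly one batch, and each job's completion time $C_i$ equals the completion time of its batch. The objective is to minimize $\sum_{i\in N} w_iC_i$. For each family $j$, order the jobs of $N_j$ in non-increasing order of size and load them greedily in that order until the remaining capacity is insufficient for the next job; let $N_j^b$ be the number of jobs so loaded, and let $B_j=\lceil |N_j|/N_j^b\rceil$. Then there exists an optimal solution in which, for every family $j$, the number of batches containing jobs of family $j$ is at most $B_j$.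
   Context: Any $N_j^b$ jobs of $N_j$ together have total size at most $V$ (since the $N_j^b$ largest jobs of $N_j$ fit). The weights $w_i$ are assumed nonnegative (in the paper they are drawn from positive integers). *)

From mathcomp Require Import all_boot all_order all_algebra.
Set Implicit Arguments. Unset Strict Implicit. Unset Printing Implicit Defensive.
Import Order.TTheory GRing.Theory Num.Theory.
Local Open Scope ring_scope.

(* Jobs are 'I_n, families are 'I_m, [fam i] is the family of job i
   (so N_j = [set i | fam i == j] partition the jobs).
   w : weights, v : sizes, V : capacity, q : processing time of each family. *)

Definition family_jobs (n m : nat) (fam : 'I_n -> 'I_m) (j : 'I_m) : {set 'I_n} :=
  [set i | fam i == j].

Fixpoint greedy_count (R : numDomainType) (cap : R) (s : seq R) : nat :=
  if s is x :: s' then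
    (if x <= cap then (greedy_count (cap - x) s').+1 else 0%N)
  else 0%N.

Definition sorted_sizes (R : numDomainType) (n m : nat) (fam : 'I_n -> 'I_m)
    (v : 'I_n -> R) (j : 'I_m) : seq R :=
  sort (fun x y : R => y <= x) [seq v i | i <- enum (family_jobs fam j)].

Definition Nb (R : numDomainType) (n m : nat) (fam : 'I_n -> 'I_m)
    (v : 'I_n -> R) (V : R) (j : 'I_m) : nat :=
  greedy_count V (sorted_sizes fam v j).

Definition ceil_div (a b : nat) : nat := ((a + b.-1) %/ b)%N.

Definition Bbound (R : numDomainType) (n m : nat) (fam : 'I_n -> 'I_m)
    (v : 'I_n -> R) (V : R) (j : 'I_m) : nat :=
  ceil_div #|family_jobs fam j| (Nb fam v V j).

(* A solution: since there are at most n nonempty batches, batches are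
   labelled by 'I_n.  [assign i] is the batch of job i, [start k] is the
   start time of batch k.  Only nonempty batches (those containing a job)
   matter; batch k is the set [set i | assign i == k]. *)
Definition feasible (R : numDomainType) (n m : nat) (fam : 'I_n -> 'I_m)
    (v : 'I_n -> R) (V : R) (q : 'I_m -> R)
    (assign : 'I_n -> 'I_n) (start : 'I_n -> R) : Prop :=
  (forall i i' : 'I_n, assign i = assign i' -> fam i = fam i')
  /\ (forall k : 'I_n, \sum_(i | assign i == k) v i <= V)
  /\ (forall i : 'I_n, 0 <= start (assign i))
  /\ (forall i i' : 'I_n, assign i != assign i' ->
        start (assign i) + q (fam i) <= start (assign i')
        \/ start (assign i') + q (fam i') <= start (assign i)).

Definition completion (R : numDomainType) (n m : nat) (fam : 'I_n -> 'I_m)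
    (q : 'I_m -> R) (assign : 'I_n -> 'I_n) (start : 'I_n -> R) (i : 'I_n) : R :=
  start (assign i) + q (fam i).

Definition cost (R : numDomainType) (n m : nat) (fam : 'I_n -> 'I_m)
    (w : 'I_n -> R) (q : 'I_m -> R) (assign : 'I_n -> 'I_n) (start : 'I_n -> R) : R :=
  \sum_(i < n) w i * completion fam q assign start i.

Definition num_batches (n m : nat) (fam : 'I_n -> 'I_m)
    (assign : 'I_n -> 'I_n) (j : 'I_m) : nat :=
  #|assign @: family_jobs fam j|.

From mathcomp Require Import all_boot all_order all_algebra zify.
From mathcomp Require Import boolp.
Import Order.TTheory GRing.Theory Num.Theory.
Set Implicit Arguments. Unset Strict Implicit. Unset Printing Implicit Defensive.
Local Open Scope ring_scope.

(* Since start times are real, optimality is first reduced to a finite search: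
   shifting every batch as far left as possible (its start becomes the total
   length of the batches before it) is feasible and costs no more, and such a
   schedule is determined by the assignment of jobs to batches and by the set of
   predecessors of each batch.  Among these finitely many schedules a cheapest one
   exists.  To bound the number of batches, note that any N_j^b jobs of N_j fit
   into one batch (the greedy prefix of the sizes sorted non-increasingly has the
   largest total among all sets of N_j^b jobs).  So if family j uses more than
   B_j batches, some batch other than its last one holds fewer than N_j^b jobs,
   and a job of the last batch can be moved into it: this keeps the schedule
   feasible, does not increase the cost, and strictly decreases the number of
   pairs (job, nonempty batch starting before the job's batch). *)

Section SumBounds.
Variable R : numDomainType.

Lemma ler_sum_subpred (I : finType) (P Q : pred I) (F : I -> R) :
  (forall i, P i -> Q i) -> (forall i, Q i -> 0 <= F i) ->
  \sum_(i | P i) F i <= \sum_(i | Q i) F i.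
Proof.
move=> PQ F_ge0; rewrite [X in _ <= X](bigID P) /=.
have -> : \sum_(i | P i) F i = \sum_(i | Q i && P i) F i.
  by apply: eq_bigl => i; case: (boolP (P i)) => [/PQ ->|_]; rewrite ?andbF.
by rewrite lerDl sumr_ge0 // => i /andP[/F_ge0].
Qed.

Lemma greedy_count_sum_le (s : seq R) (cap : R) : 0 <= cap ->
  \sum_(x <- take (greedy_count cap s) s) x <= cap.
Proof.
elim: s cap => [|x s IH] cap cap_ge0 /=; first by rewrite big_nil.
case: ifP => x_le /=; last by rewrite big_nil.
by rewrite big_cons -lerBrDl IH // subr_ge0.
Qed.

Lemma sum_take_S_le (s : seq R) (x : R) k :
  (forall y, y \in s -> y <= x) -> 0 <= x ->
  \sum_(y <- take k.+1 s) y <= x + \sum_(y <- take k s) y.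
Proof.
elim: s k => [|y s IH] [|k] s_le x_ge0 /=; rewrite ?take0 ?big_nil ?addr0 //.
  by rewrite big_cons big_nil addr0 s_le ?mem_head.
rewrite !big_cons addrCA lerD2l IH // => z zs.
by rewrite s_le // in_cons zs orbT.
Qed.

(* [perm_eq s (t ++ u)] says that [t] is a sub-multiset of [s]. *)
Lemma sum_submultiset_le_take (s t u : seq R) k :
  sorted (fun x y => y <= x) s -> (forall y, y \in s -> 0 <= y) ->
  perm_eq s (t ++ u) -> (size t <= k)%N ->
  \sum_(x <- t) x <= \sum_(x <- take k s) x.
Proof.
elim: s k t u => [|x s IH] k t u s_sorted s_ge0 s_tu t_le.
  by move/perm_size: s_tu; rewrite size_cat; case: t {t_le}.
case: k t_le => [|k] t_le; first by case: t {s_tu} t_le; rewrite big_nil.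
have sorted_s := path_sorted s_sorted.
have s_ge0' y : y \in s -> 0 <= y by move=> ys; rewrite s_ge0 // in_cons ys orbT.
have s_le_x y : y \in s -> y <= x.
  have ge_trans : transitive (fun x y : R => y <= x) by move=> ? ? ? /= ? /le_trans; apply.
  by move: y; apply/allP; apply: order_path_min ge_trans s_sorted.
have x_in : x \in t ++ u by rewrite -(perm_mem s_tu) mem_head.
case xt: (x \in t).
  have t_rem := perm_to_rem xt.
  rewrite /= big_cons (perm_big _ t_rem) big_cons lerD2l.
  apply: (IH k _ u) => //; last by move: t_le; rewrite (perm_size t_rem).
  by rewrite -(perm_cons x) (perm_trans s_tu) // -cat_cons perm_cat2r.
have xu : x \in u by rewrite mem_cat xt in x_in.
rewrite /= big_cons; apply: le_trans _ (sum_take_S_le k s_le_x (s_ge0 x (mem_head _ _))).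
apply: (IH k.+1 t (rem x u)) => //.
rewrite -(perm_cons x) (perm_trans s_tu) // -cat1s perm_sym perm_catCA perm_cat2l.
by rewrite perm_sym perm_to_rem.
Qed.

End SumBounds.

Lemma card_imset_le_ceil_div (T T' : finType) (f : T -> T') (A : {set T}) b k0 :
  (0 < b)%N -> k0 \in f @: A ->
  (forall k, k \in f @: A -> k != k0 -> b <= #|[set x in A | f x == k]|)%N ->
  (#|f @: A| <= ceil_div #|A| b)%N.
Proof.
move=> b_gt0 k0_in fibers_big.
have cardA : #|A| = (\sum_(k in f @: A) #|[set x in A | f x == k]|)%N.
  rewrite -sum1_card (partition_big_imset f); apply: eq_bigr => k _.
  by rewrite -sum1_card; apply: eq_bigl => x; rewrite inE.
have fiber0_gt0 : (0 < #|[set x in A | f x == k0]|)%N.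
  by case/imsetP: k0_in => x xA ->; apply/card_gt0P; exists x; rewrite inE xA eqxx.
have : (#|f @: A|.-1 * b + 1 <= #|A|)%N.
  rewrite cardA (big_setD1 _ k0_in) (cardsD1 k0) k0_in addnC leq_add //.
  rewrite -sum_nat_const leq_sum // => k; rewrite !inE => /andP[k_ne k_in].
  by apply: fibers_big; rewrite ?k_in.
rewrite /ceil_div leq_divRL //.
have : (0 < #|f @: A|)%N by apply/card_gt0P; exists k0.
case: #|f @: A| => // c _; rewrite -!subn1 mulSn; lia.
Qed.

Section Scheduling.
Variables (R : realFieldType) (n m : nat) (fam : 'I_n -> 'I_m).
Variables (w v : 'I_n -> R) (V : R) (q : 'I_m -> R).
Hypothesis w_ge0 : forall i, 0 <= w i.
Hypothesis v_range : forall i, 0 <= v i <= V.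
Hypothesis q_gt0 : forall j, 0 < q j.

Lemma Nb_gt0 j : (0 < #|family_jobs fam j|)%N -> (0 < Nb fam v V j)%N.
Proof.
rewrite /Nb /sorted_sizes cardE -(size_map v) -(size_sort (fun x y : R => y <= x)).
have : all (fun x => x <= V)
    (sort (fun x y : R => y <= x) [seq v i | i <- enum (family_jobs fam j)]).
  by rewrite all_sort; apply/allP => _ /mapP[i _ ->]; case/andP: (v_range i).
by case: sort => //= x s /andP[-> _].
Qed.

Lemma family_subset_fits j (A : {set 'I_n}) : 0 <= V ->
  A \subset family_jobs fam j -> (#|A| <= Nb fam v V j)%N -> \sum_(i in A) v i <= V.
Proof.
move=> V_ge0 A_sub A_small.
set l := enum (family_jobs fam j).
have sizes_split : perm_eq (sorted_sizes fam v j)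
    ([seq v i | i <- l & i \in A] ++ [seq v i | i <- l & i \notin A]).
  rewrite /sorted_sizes -map_cat perm_sort perm_map //.
  by rewrite perm_sym perm_filterC.
have -> : \sum_(i in A) v i = \sum_(x <- [seq v i | i <- l & i \in A]) x.
  rewrite big_map big_filter /l big_enum_cond; apply: eq_bigl => i.
  by case iA: (i \in A); rewrite ?andbT ?andbF ?(subsetP A_sub).
apply: le_trans _ (greedy_count_sum_le _ V_ge0).
apply: sum_submultiset_le_take sizes_split _.
- by apply: sort_sorted => x y; apply: le_total.
- by move=> y; rewrite mem_sort => /mapP[i _ ->]; case/andP: (v_range i).
- rewrite size_map (leq_trans _ A_small) // cardE.
  apply: uniq_leq_size (filter_uniq _ (enum_uniq _)) _ => x.
  by rewrite mem_filter !mem_enum => /andP[].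
Qed.

Section FeasibleSchedule.
Variables (a : 'I_n -> 'I_n) (s : 'I_n -> R).
Hypothesis feas : feasible fam v V q a s.

Lemma feasible_pure x y : a x = a y -> fam x = fam y.
Proof. by case: feas => pure _; apply: pure. Qed.

Lemma feasible_start_ge0 x : 0 <= s (a x).
Proof. by case: feas => _ [_ []]. Qed.

Lemma feasible_disjoint x y : s (a x) < s (a y) -> s (a x) + q (fam x) <= s (a y).
Proof.
move=> lt_xy; have [_ [_ [_ disj]]] := feas.
have ne_xy : a x != a y by apply: contraTneq lt_xy => ->; rewrite ltxx.
case: (disj x y ne_xy) => // le_yx.
by move: lt_xy; rewrite ltNge (le_trans _ le_yx) // lerDl ltW.
Qed.

Lemma feasible_start_inj k k' :
  k \in codom a -> k' \in codom a -> s k = s k' -> k = k'.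
Proof.
move=> /codomP[x ->] /codomP[y ->] eq_s; apply/eqP/negPn/negP => ne_xy.
have [_ [_ [_ disj]]] := feas.
by case: (disj x y ne_xy); rewrite ?eq_s -lerBrDl subrr leNgt q_gt0.
Qed.

End FeasibleSchedule.

Definition earlier (a : 'I_n -> 'I_n) (s : 'I_n -> R) (k : 'I_n) : {set 'I_n} :=
  [set k' | (k' \in codom a) && (s k' < s k)].

(* [0] for an empty batch. *)
Definition batch_length (a : 'I_n -> 'I_n) (k : 'I_n) : R :=
  if [pick x | a x == k] is Some x then q (fam x) else 0.

Definition start_of (a : 'I_n -> 'I_n) (B : {ffun 'I_n -> {set 'I_n}}) (k : 'I_n) : R :=
  \sum_(k' in B k) batch_length a k'.

Definition left_shift (a : 'I_n -> 'I_n) (s : 'I_n -> R) : 'I_n -> R :=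
  start_of a [ffun k => earlier a s k].

Lemma left_shiftE a s k :
  left_shift a s k = \sum_(k' in earlier a s k) batch_length a k'.
Proof. by rewrite /left_shift /start_of ffunE. Qed.

Lemma batch_length_ge0 a k : 0 <= batch_length a k.
Proof. by rewrite /batch_length; case: pickP => // x _; apply: ltW. Qed.

Lemma batch_length_assign a x :
  (forall x y, a x = a y -> fam x = fam y) -> batch_length a (a x) = q (fam x).
Proof.
move=> pure; rewrite /batch_length; case: pickP => [y /eqP/pure -> //|/(_ x)].
by rewrite eqxx.
Qed.

Lemma earlier_last a s k k1 : feasible fam v V q a s -> k1 \in earlier a s k ->
  (forall k', k' \in earlier a s k -> s k' <= s k1) ->
  earlier a s k = k1 |: earlier a s k1.
Proof.
move=> feas k1_in k1_max; move: (k1_in); rewrite inE => /andP[k1_a lt_k1].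
apply/setP => k'; rewrite in_setU1 !inE.
have [-> //|ne_k1 /=] := eqVneq k' k1; first by rewrite k1_a lt_k1.
apply/andP/andP => -[k'_a lt_k']; split=> //; last exact: lt_trans lt_k1.
rewrite lt_neqAle k1_max ?inE ?k'_a ?lt_k' // andbT.
by apply: contra ne_k1 => /eqP/(feasible_start_inj feas k'_a k1_a) ->.
Qed.

(* Induction on the number of earlier batches, peeling off the latest one. *)
Lemma left_shift_le a s k : feasible fam v V q a s ->
  k \in codom a -> left_shift a s k <= s k.
Proof.
move=> feas; have [N] := ubnP #|earlier a s k|; elim: N k => // N IH k.
rewrite ltnS => card_le k_a; rewrite left_shiftE.
have [->|[k0 k0_in]] := set_0Vmem (earlier a s k).
  by rewrite big_set0; case/codomP: k_a => x ->; apply: feasible_start_ge0 feas x.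
case: (arg_maxP s k0_in) => k1 k1_in k1_max.
have k1_notin : k1 \notin earlier a s k1 by rewrite inE ltxx andbF.
have /[!inE]/andP[k1_a lt_k1] : k1 \in earlier a s k := k1_in.
move: card_le; rewrite (earlier_last feas k1_in k1_max) cardsU1 k1_notin big_setU1 //=.
move=> card_le.
have [y k1_y] := codomP k1_a; have [x k_x] := codomP k_a.
rewrite {1}k1_y batch_length_assign; last exact: feasible_pure feas.
rewrite k1_y k_x in lt_k1; rewrite k_x.
apply: le_trans _ (feasible_disjoint feas lt_k1); rewrite -k1_y addrC lerD2r.
by rewrite -left_shiftE IH.
Qed.

Lemma left_shift_disjoint a s x y : feasible fam v V q a s -> s (a x) < s (a y) ->
  left_shift a s (a x) + q (fam x) <= left_shift a s (a y).
Proof.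
move=> feas lt_xy; rewrite !left_shiftE.
have sub : a x |: earlier a s (a x) \subset earlier a s (a y).
  apply/subsetP => k; rewrite in_setU1 !inE => /predU1P[->|/andP[k_a lt_k]].
    by rewrite codom_f lt_xy.
  by rewrite k_a (lt_trans lt_k lt_xy).
apply: le_trans _ (ler_sum_subpred (subsetP sub) (fun k _ => batch_length_ge0 a k)).
rewrite big_setU1 ?inE ?ltxx ?andbF //= addrC batch_length_assign //.
exact: feasible_pure feas.
Qed.

Lemma feasible_left_shift a s : feasible fam v V q a s ->
  feasible fam v V q a (left_shift a s).
Proof.
move=> feas; have [pure [cap _]] := feas; split=> //; split=> //; split=> [x|x y ne_xy].
  by rewrite left_shiftE sumr_ge0 // => k _; apply: batch_length_ge0.
have [lt_xy|lt_yx|eq_xy] := ltgtP (s (a x)) (s (a y)).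
- by left; apply: left_shift_disjoint.
- by right; apply: left_shift_disjoint.
- by case/eqP: ne_xy; apply: (feasible_start_inj feas (codom_f a x) (codom_f a y)).
Qed.

Lemma cost_left_shift_le a s : feasible fam v V q a s ->
  cost fam w q a (left_shift a s) <= cost fam w q a s.
Proof.
move=> feas; apply: ler_sum => x _; rewrite ler_wpM2l // lerD2r.
by apply: left_shift_le; rewrite ?codom_f.
Qed.

Definition move_job (a : 'I_n -> 'I_n) (i k : 'I_n) : 'I_n -> 'I_n :=
  fun x => if x == i then k else a x.

Definition predecessor_count (a : 'I_n -> 'I_n) (s : 'I_n -> R) : nat :=
  (\sum_(x < n) #|earlier a s (a x)|)%N.

Section MoveJob.
Variables (a : 'I_n -> 'I_n) (s : 'I_n -> R) (i z : 'I_n).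
Hypothesis same_family : fam z = fam i.

Lemma move_job_rep x : exists x', a x' = move_job a i (a z) x /\ fam x' = fam x.
Proof. by rewrite /move_job; case: eqP => [->|_]; [exists z | exists x]. Qed.

Lemma feasible_move_job : feasible fam v V q a s ->
  \sum_(x | move_job a i (a z) x == a z) v x <= V ->
  feasible fam v V q (move_job a i (a z)) s.
Proof.
move=> [pure [cap [start_ge0 disj]]] cap_z; split; last split; last split.
- move=> x y; case: (move_job_rep x) (move_job_rep y) => x' [<- <-] [y' [<- <-]].
  exact: pure.
- move=> k; have [->|ne_k] := eqVneq k (a z); first exact: cap_z.
  apply: le_trans _ (cap k); apply: ler_sum_subpred => [x|x _]; last by case/andP: (v_range x).
  rewrite /move_job; case: (x =P i) => [_ /eqP eq_zk|_ //].
  by rewrite -eq_zk eqxx in ne_k.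
- by move=> x; case: (move_job_rep x) => x' [<- _].
- move=> x y; case: (move_job_rep x) (move_job_rep y) => x' [<- <-] [y' [<- <-]].
  exact: disj.
Qed.

Lemma cost_move_job_le : s (a z) <= s (a i) ->
  cost fam w q (move_job a i (a z)) s <= cost fam w q a s.
Proof.
move=> le_zi; apply: ler_sum => x _; rewrite ler_wpM2l // /completion /move_job.
by case: eqP => [->|_]; rewrite ?lerD2r.
Qed.

Lemma predecessor_count_move_job : s (a z) < s (a i) ->
  (predecessor_count (move_job a i (a z)) s < predecessor_count a s)%N.
Proof.
move=> lt_zi.
have earlier_sub k : earlier (move_job a i (a z)) s k \subset earlier a s k.
  apply/subsetP => k'; rewrite !inE => /andP[/codomP[x ->] ->].
  by case: (move_job_rep x) => x' [<- _]; rewrite codom_f.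
rewrite /predecessor_count (bigD1 i) //= [X in (_ < X)%N](bigD1 i) //=.
rewrite -addSn leq_add //.
  have -> : move_job a i (a z) i = a z by rewrite /move_job eqxx.
  apply: leq_ltn_trans (subset_leq_card (earlier_sub _)) _.
  apply: proper_card; apply/properP; split.
    by apply/subsetP => k; rewrite !inE => /andP[-> /lt_trans]; apply.
  by exists (a z); rewrite !inE ?codom_f ?lt_zi ?ltxx ?andbF.
by apply: leq_sum => x ne_x; rewrite /move_job (negbTE ne_x) subset_leq_card.
Qed.

End MoveJob.

Lemma exists_underfull_batch a s j : feasible fam v V q a s ->
  ~~ (num_batches fam a j <= Bbound fam v V j)%N ->
  exists i z, [/\ fam i = j, fam z = j, s (a z) < s (a i)
    & (#|[set x in family_jobs fam j | a x == a z]| < Nb fam v V j)%N].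
Proof.
move=> feas too_many.
set K := a @: family_jobs fam j.
have [k0 k0_in] : exists k0, k0 \in K.
  by apply/set0Pn; apply: contraNneq too_many; rewrite /num_batches -/K => ->; rewrite cards0.
case: (arg_maxP s k0_in) => _ /imsetP[i i_in ->] i_last.
have : ~~ [forall k in K,
    (k != a i) ==> (Nb fam v V j <= #|[set x in family_jobs fam j | a x == k]|)%N].
  apply: contra too_many => /forall_inP fibers_big.
  apply: (card_imset_le_ceil_div (k0 := a i)); first 2 last.
  - by move=> k k_in; apply/implyP/fibers_big.
  - by apply: Nb_gt0; apply/card_gt0P; exists i.
  - exact: imset_f.
case/forall_inPn => _ /imsetP[z z_in ->]; rewrite negb_imply -ltnNge => /andP[ne_zi small].
have le_zi : s (a z) <= s (a i) by apply: i_last; apply: imset_f.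
rewrite !inE in i_in z_in; exists i, z; split; rewrite ?(eqP i_in) ?(eqP z_in) //.
rewrite lt_neqAle le_zi andbT; apply: contra ne_zi.
by move=> /eqP/(feasible_start_inj feas (codom_f a z) (codom_f a i)) ->.
Qed.

Lemma exists_improving_move a s j : feasible fam v V q a s ->
  ~~ (num_batches fam a j <= Bbound fam v V j)%N ->
  exists a', [/\ feasible fam v V q a' s, cost fam w q a' s <= cost fam w q a s
    & (predecessor_count a' s < predecessor_count a s)%N].
Proof.
move=> feas too_many.
have [i [z [fam_i fam_z lt_zi small]]] := exists_underfull_batch feas too_many.
have same_family : fam z = fam i by rewrite fam_i fam_z.
set B := [set x in family_jobs fam j | a x == a z].
have batch_sub : [set x | move_job a i (a z) x == a z] \subset i |: B.
  apply/subsetP => x; rewrite !inE /move_job.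
  case: (x =P i) => [->|_ eq_xz]; first by rewrite eqxx.
  by rewrite eq_xz (feasible_pure feas (eqP eq_xz)) fam_z eqxx orbT.
have fits : \sum_(x | move_job a i (a z) x == a z) v x <= V.
  have V_ge0 : 0 <= V by case/andP: (v_range i); apply: le_trans.
  apply: le_trans _ (family_subset_fits (A := i |: B) (j := j) V_ge0 _ _).
  - apply: ler_sum_subpred => [x x_in|x _]; last by case/andP: (v_range x).
    by apply: (subsetP batch_sub); rewrite inE.
  - apply/subsetP => x; rewrite !inE => /predU1P[->|/andP[//]].
    by rewrite fam_i.
  - by rewrite cardsU1 (leq_trans _ small) // -add1n leq_add2r leq_b1.
exists (move_job a i (a z)); split.
- exact: feasible_move_job.
- exact/cost_move_job_le/ltW.
- exact: predecessor_count_move_job.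
Qed.

Lemma exists_bounded_reassignment a s : feasible fam v V q a s ->
  exists a', [/\ feasible fam v V q a' s, cost fam w q a' s <= cost fam w q a s
    & forall j, (num_batches fam a' j <= Bbound fam v V j)%N].
Proof.
have [N] := ubnP (predecessor_count a s); elim: N a => // N IH a.
rewrite ltnS => count_le feas.
have [bounded|/forallPn[j too_many]] :=
  boolP [forall j, num_batches fam a j <= Bbound fam v V j]%N.
  by exists a; split=> // j; apply: (forallP bounded).
have [a' [feas' cost' count']] := exists_improving_move feas too_many.
have [a'' [feas'' cost'' bounded'']] := IH a' (leq_trans count' count_le) feas'.
by exists a''; split=> //; apply: le_trans cost'' cost'.
Qed.

Lemma exists_feasible : exists a s, feasible fam v V q a s.
Proof.
pose s (k : 'I_n) := \sum_(k' < n | (k' < k)%N) q (fam k').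
have before (x y : 'I_n) : (x < y)%N -> s x + q (fam x) <= s y.
  move=> lt_xy; rewrite /s [X in _ <= X](bigD1 x) //= [X in _ <= X]addrC lerD2r.
  apply: ler_sum_subpred => [k lt_kx|k _]; last exact: ltW.
  by rewrite (ltn_trans lt_kx lt_xy) /=; apply: contraTneq lt_kx => ->; rewrite ltnn.
exists id, s; split=> [x y -> //|]; split=> [k|].
  by rewrite big_pred1_eq; case/andP: (v_range k).
split=> [x|x y ne_xy]; first by apply: sumr_ge0 => k _; apply: ltW.
by case: (ltngtP x y) => [/before|/before|/val_inj eq_xy]; [left|right|case/eqP: ne_xy].
Qed.

(* [t] encodes a left-shifted schedule by its assignment and the predecessor
   sets of its batches. *)
Definition normal_schedule (t : {ffun 'I_n -> 'I_n} * {ffun 'I_n -> {set 'I_n}}) : Prop :=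
  feasible fam v V q t.1 (start_of t.1 t.2) /\
  forall j, (num_batches fam t.1 j <= Bbound fam v V j)%N.

Definition schedule_cost (t : {ffun 'I_n -> 'I_n} * {ffun 'I_n -> {set 'I_n}}) : R :=
  cost fam w q t.1 (start_of t.1 t.2).

Lemma normal_schedule_le a s : feasible fam v V q a s ->
  exists2 t, normal_schedule t & schedule_cost t <= cost fam w q a s.
Proof.
move=> feas; have [a' [feas' cost' bounded']] := exists_bounded_reassignment feas.
have a'E : fun_of_fin [ffun x => a' x] = a' by apply/funext => x; rewrite ffunE.
exists ([ffun x => a' x], [ffun k => earlier a' s k]);
  rewrite /normal_schedule /schedule_cost /= a'E.
  by split=> //; apply: feasible_left_shift.
exact: le_trans (cost_left_shift_le feas') cost'.
Qed.

End Scheduling.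

Theorem mainTheorem1 (R : realFieldType) (n m : nat) (fam : 'I_n -> 'I_m)
    (w v : 'I_n -> R) (V : R) (q : 'I_m -> R) :
  (forall i, 0 <= w i) ->
  (forall i, 0 <= v i <= V) ->
  (forall j, 0 < q j) ->
  exists (assign : 'I_n -> 'I_n) (start : 'I_n -> R),
    [/\ feasible fam v V q assign start,
        (forall (assign' : 'I_n -> 'I_n) (start' : 'I_n -> R),
            feasible fam v V q assign' start' ->
            cost fam w q assign start <= cost fam w q assign' start')
      & (forall j, (num_batches fam assign j <= Bbound fam v V j)%N)].
Proof.
move=> w_ge0 v_range q_gt0.
have [a0 [s0 feas0]] := exists_feasible fam v_range q_gt0.
have [t0 t0_normal _] := normal_schedule_le w_ge0 v_range q_gt0 feas0.
pose normal t := `[< normal_schedule fam v V q t >].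
have t0_in : normal t0 by apply/asboolP.
case: (arg_minP (schedule_cost fam w q) t0_in) => t /asboolP[feas bounded] t_min.
exists t.1, (start_of fam q t.1 t.2); split=> // a s feas_as.
have [t' t'_normal cost_le] := normal_schedule_le w_ge0 v_range q_gt0 feas_as.
by apply: le_trans (t_min t' _) cost_le; apply/asboolP.
Qed.
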